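(* Let $s\ge0$ and let $V_1,\ldots,V_n$ be vector subspaces of a finite-dimensional real vector space, each $V_i$ with a fixed generating set $\{v^i_1,\ldots,v^i_{m_i}\}$. Consider the polyhedron $$P=\Big\{(d_1,\ldots,d_n)\in\mathbb R^n:\ d_1\ge0,\ldots,d_n\ge0,\ \sum_{i\in I}d_i+\dim\Big(\sum_{i\in I^c}V_i\Big)\ge s\ \text{for all } I\subset\{1,\ldots,n\}\Big\}.$$ Then every vertex of $P$ is of the form $\widehat J(i)$ for some $(J,i)\in\overline{\mathbb J}$.
   Context: $I^c=\{1,\ldots,n\}\setminus I$; $\sum_{i\in\emptyset}d_i=0$ and the empty sum of subspaces is $\{0\}$. $\mathbb J$ is the family of all tuples $J=(\mathrm j_1,\ldots,\mathrm j_n)$ with $\mathrm j_i\subset\{v^i_1,\ldots,v^i_{m_i}\}$ such that the family formed by all elements of $\mathrm j_1,\ldots,\mathrm j_n$ taken together is linearly independent and $\#\mathrm j_1+\cdots+\#\mathrm j_n\ge s$. For $J\in\mathbb J$, $i\in\{1,\ldots,n\}$, $\widehat J(i)=(\#\mathrm j_1,\ldots,\#\mathrm j_n)+(s-(\#\mathrm j_1+\cdots+\#\mathrm j_n))e_i$ with $e_i$ the canonical basis of $\mathbb R^n$, and $\overline{\mathbb J}=\{(J,i): J\in\mathbb J,\ \widehat J(i)\ge 0 \text{ coordinatewise}\}$. *)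

From HB Require Import structures.
From mathcomp Require Import all_boot all_order all_algebra.
Unset Printing Implicit Defensive.
Import Order.TTheory GRing.Theory Num.Theory.
Local Open Scope ring_scope.

Section Polyhedron.
Variables (R : realFieldType) (V : vectType R) (n : nat) (m : 'I_n -> nat)
  (v : forall i : 'I_n, 'I_(m i) -> V) (s : R).

Definition Vsp (i : 'I_n) : {vspace V} := (<< [seq v i a | a <- enum 'I_(m i)] >>)%VS.

Definition inP (d : 'rV[R]_n) : Prop :=
  (forall k, 0 <= d 0 k) /\
  (forall I : {set 'I_n},
     s <= \sum_(k in I) d 0 k + (\dim (\sum_(k in ~: I) Vsp k)%VS)%:R).

Definition is_vertex (P : 'rV[R]_n -> Prop) (d : 'rV[R]_n) : Prop :=
  P d /\ forall (x y : 'rV[R]_n) (t : R), P x -> P y -> 0 < t -> t < 1 ->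
    d = t *: x + (1 - t) *: y -> x = y.

Definition Jfam (J : forall i : 'I_n, {set 'I_(m i)}) : seq V :=
  flatten [seq [seq v k a | a <- enum (J k)] | k <- enum 'I_n].

Definition Jtot (J : forall i : 'I_n, {set 'I_(m i)}) : nat := (\sum_k #|J k|)%N.

Definition inJJ (J : forall i : 'I_n, {set 'I_(m i)}) : Prop :=
  free (Jfam J) /\ s <= (Jtot J)%:R.

Definition Jhat (J : forall i : 'I_n, {set 'I_(m i)}) (i : 'I_n) : 'rV[R]_n :=
  \row_k ((#|J k|)%:R + (k == i)%:R * (s - (Jtot J)%:R)).

Definition inJbar (J : forall i : 'I_n, {set 'I_(m i)}) (i : 'I_n) : Prop :=
  inJJ J /\ forall k, 0 <= Jhat J i 0 k.

End Polyhedron.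

From HB Require Import structures.
From mathcomp Require Import all_boot all_order all_algebra.
From mathcomp Require Import ring lra.
Import Order.TTheory GRing.Theory Num.Theory.
Local Open Scope ring_scope.

(* 1. General facts: at a vertex of a polyhedron given by finitely many linear
      inequalities, a direction preserving all active constraints is zero
      (vertex_rigid); zeros of a nonnegative submodular set function form a
      lattice with a largest element (submod_max_zero); greedy extension of a
      basis of U by generators of a further space (greedy_extension).
   2. r is monotone and submodular; "adapted" families J (generators over X
      forming a basis of sum_{k in X} V_k) grow greedily one index at a time.
   3. At a vertex d (with s >= 0): d(all) = s, so the constraints become
      d(W) <= r(W); tight sets (defect W = 0) are closed under union and
      intersection, two nonzero coordinates are separated by a tight set, and
      each nonempty tight set loses one element and stays tight.  Hence a
      tight set carries an adapted J with d_j = #|J j|, and d is supported on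
      a tight set U plus one index i.  Extending J greedily at i gives
      d = Jhat J i (vertex_witness), which is the theorem. *)

Lemma pos_lower_bound (R : realDomainType) (T : finType) (P : pred T) (f : T -> R) :
  (forall x, P x -> 0 < f x) -> exists2 e, 0 < e & forall x, P x -> e <= f x.
Proof.
move=> f_gt0; have [x0 Px0 | noP] := pickP P; last by exists 1 => // x; rewrite noP.
by case: (arg_minP f Px0) => x Px minx; exists (f x); [exact: f_gt0 | exact: minx].
Qed.

Section VertexRigidity.
Context {R : realFieldType} {n : nat} {C : finType}.
Context {phi : C -> 'rV[R]_n -> R} {b : C -> R} {P : 'rV[R]_n -> Prop}.
Hypothesis phiD : forall c x y, phi c (x + y) = phi c x + phi c y.
Hypothesis phiZ : forall c t x, phi c (t *: x) = t * phi c x.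
Hypothesis PE : forall x, P x <-> forall c, b c <= phi c x.

(* At a vertex d, a direction z that keeps every active constraint constant
   vanishes: otherwise d +- eps z both stay in P for eps small. *)
Lemma vertex_rigid d z : is_vertex R n P d ->
  (forall c, phi c d = b c -> phi c z = 0) -> z = 0.
Proof.
move=> [Pd d_extreme] active; have feas := (PE d).1 Pd.
have [eps eps_gt0 eps_le] : exists2 eps, 0 < eps &
    forall c, phi c d != b c -> eps <= (phi c d - b c) / (1 + `|phi c z|).
  apply: pos_lower_bound => c inactive.
  have one_gt0 : 0 < 1 + `|phi c z| by rewrite ltr_wpDr.
  by rewrite divr_gt0 // subr_gt0 lt_neqAle eq_sym inactive feas.
have moved_in t : `|t| <= eps -> P (d + t *: z).
  move=> t_small; apply/PE => c; rewrite phiD phiZ.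
  have [act | inact] := eqVneq (phi c d) (b c).
    by rewrite act active // mulr0 addr0.
  have := eps_le c inact; rewrite ler_pdivlMr ?ltr_wpDr // => room.
  have : `|t * phi c z| <= phi c d - b c.
    rewrite normrM; apply: le_trans room; rewrite mulrDr mulr1.
    by rewrite ler_wpDl ?(ltW eps_gt0) // ler_wpM2r.
  by rewrite ler_norml => /andP [lo _]; lra.
have eps_small : `|eps| <= eps by rewrite ger0_norm ?(ltW eps_gt0).
have mid : d = 2^-1 *: (d + eps *: z) + (1 - 2^-1) *: (d + (- eps) *: z).
  apply/rowP => k; rewrite !mxE.
  have two_neq0 : (2 : R) != 0 by rewrite pnatr_eq0.
  by field.
have half_gt0 : (0 : R) < 2^-1 by rewrite invr_gt0 ltr0n.
have half_lt1 : (2^-1 : R) < 1 by rewrite invf_lt1 ?ltr0n ?ltr1n.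
have P_minus : P (d + (- eps) *: z) by apply: moved_in; rewrite normrN.
have := d_extreme _ _ _ (moved_in _ eps_small) P_minus half_gt0 half_lt1 mid.
move=> /addrI /eqP; rewrite scaleNr -addr_eq0 -scalerDl scaler_eq0.
by rewrite gt_eqF ?addr_gt0 //= => /eqP.
Qed.

End VertexRigidity.

Section SubmodularZeros.
Context {R : realDomainType} {T : finType} {f : {set T} -> R}.
Hypothesis f_ge0 : forall A, 0 <= f A.
Hypothesis f_submod : forall A B, f (A :|: B) + f (A :&: B) <= f A + f B.

Lemma submod_zero_closed A B : f A = 0 -> f B = 0 ->
  f (A :|: B) = 0 /\ f (A :&: B) = 0.
Proof.
move=> fA fB; have := f_submod A B; have := f_ge0 (A :|: B); have := f_ge0 (A :&: B).
by rewrite fA fB; split; lra.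
Qed.

Lemma submod_max_zero A : f A = 0 ->
  exists M, f M = 0 /\ forall B, f B = 0 -> B \subset M.
Proof.
move=> fA; have zA : f A == 0 by apply/eqP.
have [M /eqP fM M_max] := @arg_maxnP _ A (fun B => f B == 0) (fun B => #|B|) zA.
exists M; split=> // B fB; have [fBM _] := submod_zero_closed B M fB fM.
have /eqP -> : M == B :|: M by rewrite eqEcard subsetUr; apply: M_max; apply/eqP.
exact: subsetUl.
Qed.

End SubmodularZeros.

Section Greedy.
Context {K : fieldType} {V : vectType K}.

Lemma dim_add_line (U : {vspace V}) x : x \notin U -> \dim (U + <[x]>) = (\dim U).+1.
Proof.
move=> xU; have x0 : x != 0 by apply: contraNneq xU => ->; rewrite mem0v.
have grow : (\dim U < \dim (U + <[x]>))%N.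
  by rewrite (ltn_leqif (dimv_leqif_sup (addvSl U <[x]>))) subv_add subvv -memvE xU.
have := (dimv_add_leqif U <[x]>).1; rewrite dim_vline x0 addn1 => shrink.
by apply/eqP; rewrite eqn_leq shrink grow.
Qed.

Lemma greedy_extension {I : finType} (w : I -> V) (U : {vspace V}) :
  exists A : {set I},
    (U + \sum_(a in A) <[w a]> = U + \sum_a <[w a]>)%VS /\
    \dim (U + \sum_(a in A) <[w a]>) = (\dim U + #|A|)%N.
Proof.
pose indep (A : {set I}) := \dim (U + \sum_(a in A) <[w a]>) == (\dim U + #|A|)%N.
have indep0 : indep set0 by rewrite /indep big_set0 addv0 cards0 addn0.
have [A /eqP dimA A_max] := @arg_maxnP _ set0 indep (fun A => #|A|) indep0.
exists A; split=> //; apply/eqP; rewrite eqEsubv addvS ?subvv //=; last first.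
  by apply/subv_sumP => a _; exact: (sumv_sup a).
rewrite subv_add addvSl; apply/subv_sumP => a _; rewrite -memvE.
apply/negPn/negP => wa_out.
have aA : a \notin A.
  apply: contra wa_out => aA; rewrite memvE; apply: subv_trans (addvSr _ _).
  exact: (sumv_sup a).
have : indep (a |: A).
  rewrite /indep big_setU1 //= [(<[w a]> + _)%VS]addvC addvA dim_add_line //.
  by rewrite dimA cardsU1 aA add1n addnS.
by move/A_max; rewrite cardsU1 aA add1n /= ltnn.
Qed.

End Greedy.

Section RankFunction.
Context {R : realFieldType} {V : vectType R} {n : nat} {m : 'I_n -> nat}.
Variable v : forall i : 'I_n, 'I_(m i) -> V.
Local Notation Vs := (Vsp R V n m v).

Definition spanOf (W : {set 'I_n}) : {vspace V} := (\sum_(k in W) Vs k)%VS.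
Definition rk (W : {set 'I_n}) : nat := \dim (spanOf W).

Lemma rk_set0 : rk set0 = 0%N.
Proof. by rewrite /rk /spanOf big_set0 dimv0. Qed.

Lemma spanOf_mono (A B : {set 'I_n}) : A \subset B -> (spanOf A <= spanOf B)%VS.
Proof.
by move=> AB; apply/subv_sumP => k kA; apply: (sumv_sup k) => //; exact: (subsetP AB).
Qed.

Lemma rk_mono (A B : {set 'I_n}) : A \subset B -> (rk A <= rk B)%N.
Proof. by move=> AB; apply/dimvS/spanOf_mono. Qed.

Lemma rk_submod (A B : {set 'I_n}) : (rk (A :|: B) + rk (A :&: B) <= rk A + rk B)%N.
Proof.
rewrite /rk {1}/spanOf big_setU; last exact: addvv.
rewrite -(dimv_sum_cap (spanOf A)) leq_add2l; apply/dimvS.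
by rewrite subv_cap !spanOf_mono ?subsetIl ?subsetIr.
Qed.

Definition gspan j (A : {set 'I_(m j)}) : {vspace V} := (\sum_(a in A) <[v j a]>)%VS.

Lemma Vsp_sum j : Vs j = (\sum_a <[v j a]>)%VS.
Proof. by rewrite /Vsp span_def big_map big_enum. Qed.

Lemma span_Jfam (J : forall j, {set 'I_(m j)}) :
  <<Jfam R V n m v J>>%VS = (\sum_j gspan j (J j))%VS.
Proof.
rewrite span_def /Jfam big_flatten /= big_map big_enum; apply: eq_bigr => j _.
by rewrite big_map big_enum.
Qed.

Lemma size_Jfam (J : forall j, {set 'I_(m j)}) : size (Jfam R V n m v J) = Jtot n m J.
Proof.
rewrite /Jfam size_flatten /shape -map_comp sumnE big_map big_enum.
by apply: eq_bigr => j _; rewrite /= size_map cardE.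
Qed.

Lemma big_update (T : Type) (idx : T) (op : Monoid.com_law idx)
    (F : forall j, {set 'I_(m j)} -> T) (J J' : forall j, {set 'I_(m j)}) k :
  F k (J k) = idx -> (forall j, j != k -> J' j = J j) ->
  \big[op/idx]_j F j (J' j) = op (F k (J' k)) (\big[op/idx]_j F j (J j)).
Proof.
move=> Fk0 J'J; rewrite (bigD1 k) //= [in RHS](bigD1 k) //= Fk0 Monoid.mul1m.
by congr (op _ _); apply: eq_bigr => j /J'J ->.
Qed.

(* J is adapted to X when its generators, which live only over X, form a basis
   of the span of the V_k with k in X. *)
Definition adapted (X : {set 'I_n}) (J : forall j, {set 'I_(m j)}) : Prop :=
  [/\ forall j, j \notin X -> J j = set0,
      (\sum_j gspan j (J j))%VS = spanOf X & Jtot n m J = rk X].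

Lemma adapted_set0 : adapted set0 (fun j => set0).
Proof.
split=> //.
  by rewrite /spanOf big_set0; apply: big1 => j _; rewrite /gspan big_set0.
by rewrite rk_set0; apply: big1 => j _; rewrite cards0.
Qed.

Lemma adapted_free (X : {set 'I_n}) (J : forall j, {set 'I_(m j)}) :
  adapted X J -> free (Jfam R V n m v J).
Proof. by case=> _ spanJ totJ; rewrite /free span_Jfam size_Jfam spanJ totJ. Qed.

Lemma adapted_extend (X : {set 'I_n}) (J : forall j, {set 'I_(m j)}) k :
  k \notin X -> adapted X J ->
  exists J', [/\ adapted (k |: X) J', forall j, j != k -> J' j = J j
               & rk (k |: X) = (rk X + #|J' k|)%N].
Proof.
move=> kX [J_out J_span J_tot].
have /fin_all_exists [A A_greedy] := fun j => greedy_extension (v j) (spanOf X).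
pose J' j := if j == k then A j else J j.
have J'k : J' k = A k by rewrite /J' eqxx.
have J'J j : j != k -> J' j = J j by rewrite /J' => /negbTE ->.
have [A_span A_dim] := A_greedy k.
have span_kX : spanOf (k |: X) = (spanOf X + Vs k)%VS.
  by rewrite /spanOf big_setU1 //= addvC.
have rk_kX : rk (k |: X) = (rk X + #|J' k|)%N.
  by rewrite /rk span_kX Vsp_sum -A_span A_dim J'k.
exists J'; split=> //; split=> //.
- by move=> j; rewrite in_setU1 negb_or => /andP [jk jX]; rewrite J'J // J_out.
- rewrite (@big_update _ _ _ gspan J J' k) //; last first.
    by rewrite J_out // /gspan big_set0.
  by rewrite J_span J'k /= addvC span_kX Vsp_sum -A_span.
- rewrite /Jtot (@big_update _ _ _ (fun j A => #|A|) J J' k) //; last first.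
    by rewrite J_out // cards0.
  by rewrite -/(Jtot n m J) /= J_tot rk_kX addnC.
Qed.

End RankFunction.

Section RowSums.
Context {R : comNzRingType} {n : nat}.

Definition rsum (x : 'rV[R]_n) (I : {set 'I_n}) : R := \sum_(k in I) x 0 k.

Lemma rsumD x y I : rsum (x + y) I = rsum x I + rsum y I.
Proof. by rewrite /rsum -big_split; apply: eq_bigr => k _; rewrite mxE. Qed.

Lemma rsumB x y I : rsum (x - y) I = rsum x I - rsum y I.
Proof. by rewrite /rsum -sumrB; apply: eq_bigr => k _; rewrite !mxE. Qed.

Lemma rsumZ t x I : rsum (t *: x) I = t * rsum x I.
Proof. by rewrite /rsum mulr_sumr; apply: eq_bigr => k _; rewrite mxE. Qed.

Lemma rsum_setC x I : rsum x setT = rsum x I + rsum x (~: I).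
Proof. by rewrite /rsum (big_setID I) setTI setTD. Qed.

Lemma rsum_modular x A B :
  rsum x (A :|: B) + rsum x (A :&: B) = rsum x A + rsum x B.
Proof.
rewrite /rsum !(big_mkcond (fun k => k \in _)) -!big_split; apply: eq_bigr => k _ /=.
by rewrite in_setU in_setI; case: (k \in A); case: (k \in B); rewrite /= ?addr0 ?add0r.
Qed.

Lemma rsum_delta k I : rsum (delta_mx 0 k) I = (k \in I)%:R.
Proof.
have [kI | kI] := boolP (k \in I).
  rewrite /rsum (big_setD1 k) //= mxE !eqxx big1 ?addr0 // => j /setD1P [jk _].
  by rewrite mxE (negbTE jk) andbF.
rewrite /rsum big1 // => j jI; rewrite mxE eqxx /=; case: eqP => // jk.
by move: kI; rewrite -jk jI.
Qed.

End RowSums.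

Section Polyhedron.
Context {R : realFieldType} {V : vectType R} {n : nat} {m : 'I_n -> nat}.
Variables (v : forall i : 'I_n, 'I_(m i) -> V) (s : R).
Local Notation rk := (rk v).
Local Notation adapted := (adapted v).

Definition cstr (c : 'I_n + {set 'I_n}) (x : 'rV[R]_n) : R :=
  match c with inl k => x 0 k | inr A => rsum x A end.
Definition cbound (c : 'I_n + {set 'I_n}) : R :=
  match c with inl _ => 0 | inr A => s - (rk (~: A))%:R end.

Lemma cstrD c x y : cstr c (x + y) = cstr c x + cstr c y.
Proof. by case: c => [k|I] /=; rewrite ?mxE ?rsumD. Qed.

Lemma cstrZ c t x : cstr c (t *: x) = t * cstr c x.
Proof. by case: c => [k|I] /=; rewrite ?mxE ?rsumZ. Qed.

Lemma inP_cstr x : inP R V n m v s x <-> forall c, cbound c <= cstr c x.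
Proof.
split=> [[x_ge0 cover] [k|I] /= | all_c]; first exact: x_ge0.
  by rewrite lerBlDr; exact: cover.
by split=> [k | I]; [exact: (all_c (inl k)) | rewrite -lerBlDr; exact: (all_c (inr I))].
Qed.

Section AtVertex.
Variable d : 'rV[R]_n.
Hypothesis s_ge0 : 0 <= s.
Hypothesis d_vertex : is_vertex R n (inP R V n m v s) d.

Lemma d_ge0 k : 0 <= d 0 k.
Proof. by case: d_vertex => -[]. Qed.

Lemma vertex_cstr (z : 'rV[R]_n) :
  (forall c, cstr c d = cbound c -> cstr c z = 0) -> z = 0.
Proof. exact: (vertex_rigid cstrD cstrZ inP_cstr _ _ d_vertex). Qed.

Definition slack (I : {set 'I_n}) : R := rsum d I + (rk (~: I))%:R - s.

Lemma slack_ge0 I : 0 <= slack I.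
Proof. by rewrite subr_ge0; case: d_vertex => -[_ cover] _; exact: cover. Qed.

Lemma slack_submod A B : slack (A :|: B) + slack (A :&: B) <= slack A + slack B.
Proof.
have := rk_submod v (~: A) (~: B); rewrite -(ler_nat R) !natrD -setCI -setCU.
by have := rsum_modular d A B; rewrite /slack; lra.
Qed.

(* a coordinate of d that is not zero lies in a tight covering inequality,
   otherwise d could be moved along that coordinate axis *)
Lemma coord_in_tight k : d 0 k != 0 -> exists2 I, slack I = 0 & k \in I.
Proof.
move=> dk.
have [I /andP [/eqP sI kI] | none] := pickP (fun I => (slack I == 0) && (k \in I)).
  by exists I.
suff /matrixP /(_ 0 k) : delta_mx 0 k = 0 :> 'rV[R]_n.
  by rewrite !mxE !eqxx => /eqP; rewrite oner_eq0.
apply: vertex_cstr => -[j | I] /= active.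
  by rewrite mxE eqxx /=; case: eqP => // jk; move: dk; rewrite -jk active eqxx.
have /negbT : (slack I == 0) && (k \in I) = false := none I.
by rewrite rsum_delta /slack active subrK subrr eqxx /= => /negbTE ->.
Qed.

(* the coordinates of a vertex add up to s: the largest tight covering
   constraint M contains every nonzero coordinate, so d(all) = d(M) <= s,
   while d(all) >= s is the constraint for I = all *)
Lemma rsum_vertex : rsum d setT = s.
Proof.
have [I sI] : exists I, slack I = 0.
  have [k dk | d0] := pickP (fun k => d 0 k != 0).
    by have [I sI _] := coord_in_tight _ dk; exists I.
  exists setT; have dT : rsum d setT = 0 by apply: big1 => k _; apply/eqP/negbFE/d0.
  by have := slack_ge0 setT; have := s_ge0; rewrite /slack dT setCT rk_set0; lra.
have [M [sM M_max]] := submod_max_zero slack_ge0 slack_submod _ sI.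
have outM k : k \notin M -> d 0 k = 0.
  move=> kM; apply/eqP/negPn/negP => /(coord_in_tight k) [J sJ kJ].
  by move: kM; rewrite (subsetP (M_max J sJ)).
have dM : rsum d (~: M) = 0 by apply: big1 => k; rewrite in_setC; exact: outM.
have := slack_ge0 setT; have := rsum_setC d M; move: sM.
by rewrite /slack setCT rk_set0 dM; have := ler0n R (rk (~: M)); lra.
Qed.

Definition defect (W : {set 'I_n}) : R := (rk W)%:R - rsum d W.

Lemma defectE W : defect W = slack (~: W).
Proof. by rewrite /slack /defect setCK -rsum_vertex (rsum_setC d W); lra. Qed.

Lemma defect_ge0 W : 0 <= defect W.
Proof. by rewrite defectE slack_ge0. Qed.

Lemma defect_submod A B :
  defect (A :|: B) + defect (A :&: B) <= defect A + defect B.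
Proof. by rewrite !defectE setCU setCI [X in X <= _]addrC; exact: slack_submod. Qed.

Lemma defect_set0 : defect set0 = 0.
Proof. by rewrite /defect rk_set0 /rsum big_set0 subrr. Qed.

Lemma defect_rigid (z : 'rV[R]_n) :
  (forall k, d 0 k = 0 -> z 0 k = 0) -> rsum z setT = 0 ->
  (forall W, defect W = 0 -> rsum z W = 0) -> z = 0.
Proof.
move=> z_supp zT z_tight; apply: vertex_cstr => -[k | I] /= active; first exact: z_supp.
have : defect (~: I) = 0 by rewrite defectE setCK /slack active subrK subrr.
by move/z_tight; move: zT; rewrite (rsum_setC z I); lra.
Qed.

Lemma separate k l : k != l -> d 0 k != 0 -> d 0 l != 0 ->
  exists2 W, defect W = 0 & (k \in W) != (l \in W).
Proof.
move=> kl dk dl.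
have [W /andP [/eqP dW sep] | none] :=
  pickP (fun W => (defect W == 0) && ((k \in W) != (l \in W))); first by exists W.
suff /matrixP /(_ 0 k) : delta_mx 0 k - delta_mx 0 l = 0 :> 'rV[R]_n.
  by rewrite !mxE !eqxx (negbTE kl) subr0 => /eqP; rewrite oner_eq0.
apply: defect_rigid => [j dj | | W dW]; rewrite ?rsumB ?rsum_delta ?in_setT ?subrr //.
  rewrite !mxE eqxx /=; case: eqP => [jk|_]; first by move: dk; rewrite -jk dj eqxx.
  by case: eqP => [jl|_]; [move: dl; rewrite -jl dj eqxx | rewrite subrr].
have := none W; rewrite dW eqxx /= => /negbT.
by rewrite negbK => /eqP ->; rewrite subrr.
Qed.

Lemma defect_closed A B : defect A = 0 -> defect B = 0 ->
  defect (A :|: B) = 0 /\ defect (A :&: B) = 0.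
Proof. exact: submod_zero_closed defect_ge0 defect_submod A B. Qed.

Lemma defect_drop_zero X k :
  defect X = 0 -> k \in X -> d 0 k = 0 -> defect (X :\ k) = 0.
Proof.
move=> dX kX dk; have := defect_ge0 (X :\ k); move: dX.
have := rk_mono v _ _ (subsetDl X [set k]); rewrite -(ler_nat R).
by rewrite /defect /rsum (big_setD1 k kX) /= dk add0r; lra.
Qed.

(* every nonempty tight set X can be peeled down by one element to a tight
   set: either X contains a zero coordinate, or a maximal tight proper subset
   Y misses exactly one element of X, since two missed elements would be
   separated by a tight W and then Y :|: (W :&: X) would contradict
   maximality *)
Lemma peel X :
  defect X = 0 -> X != set0 -> exists2 k, k \in X & defect (X :\ k) = 0.
Proof.
move=> dX X0.
have [k /andP [kX /eqP dk] | dX_pos] := pickP (fun k => (k \in X) && (d 0 k == 0)).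
  by exists k => //; exact: (defect_drop_zero _ _ dX).
have Y0 : (defect set0 == 0) && (set0 \proper X) by rewrite defect_set0 eqxx proper0.
have [Y /andP [/eqP dY YX] Y_max] :=
  @arg_maxnP _ set0 (fun Y => (defect Y == 0) && (Y \proper X)) (fun Y => #|Y|) Y0.
have [YsubX [k kX kY]] := properP YX.
have only_k l : l \in X -> l \notin Y -> l = k.
  move=> lX lY; apply/eqP/negPn/negP => lk.
  have dl : d 0 l != 0 by have := dX_pos l; rewrite lX => /negbT.
  have dk : d 0 k != 0 by have := dX_pos k; rewrite kX => /negbT.
  have [W dW sep] := separate _ _ lk dl dk.
  pose Z := Y :|: (W :&: X).
  have [dZ _] := defect_closed _ _ dY (defect_closed _ _ dW dX).2.
  have inZ j : j \in X -> j \notin Y -> (j \in Z) = (j \in W).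
    by move=> jX jY; rewrite in_setU in_setI (negbTE jY) jX andbT.
  have : (l \in Z) = (k \in Z).
    have [-> | ZX] := eqVneq Z X; first by rewrite lX kX.
    suff <- : Y = Z by rewrite (negbTE lY) (negbTE kY).
    apply/eqP; rewrite eqEcard subsetUl; apply: Y_max.
    by rewrite dZ eqxx properEneq ZX subUset (proper_sub YX) subsetIr.
  by rewrite !inZ // => eqW; rewrite eqW eqxx in sep.
exists k => //; suff -> : X :\ k = Y by [].
apply/setP => j; rewrite in_setD1.
have [jY | jY] := boolP (j \in Y).
  by rewrite (subsetP YsubX j jY) andbT; apply: contraNneq kY => <-.
have [jX | jX] := boolP (j \in X); last by rewrite andbF.
by rewrite (only_k j jX jY) eqxx.
Qed.

Lemma tight_adapted X : defect X = 0 ->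
  exists J, adapted X J /\ forall j, j \in X -> d 0 j = (#|J j|)%:R.
Proof.
elim: {X}#|X| {-2}X (erefl #|X|) => [|N IH] X cardX dX.
  exists (fun j => set0); rewrite (cards0_eq cardX).
  by split=> [|j]; [exact: (adapted_set0 v) | rewrite in_set0].
have X0 : X != set0 by apply: contraTneq isT => X0; rewrite X0 cards0 in cardX.
have [k kX dXk] := peel _ dX X0.
have [|J0 [J0_ad J0_d]] := IH (X :\ k) _ dXk.
  by move: cardX; rewrite (cardsD1 k) kX => -[].
have [J [J_ad JJ0 rk_X]] := adapted_extend v _ _ k (negbT (setD11 k X)) J0_ad.
rewrite setD1K // in J_ad rk_X.
exists J; split=> // j jX; have [-> | jk] := eqVneq j k.
  move: dX dXk; rewrite /defect rk_X natrD /rsum (big_setD1 k kX) /=; lra.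
by rewrite JJ0 // J0_d // in_setD1 jk.
Qed.

(* a vertex is supported on a tight set U plus at most one further index i:
   take U the largest tight set, or U = T :\ k by peeling if that is all of T;
   two nonzero coordinates outside the largest tight set cannot be separated *)
Lemma vertex_support : (0 < n)%N ->
  exists U i,
    [/\ defect U = 0, i \notin U & forall l, l \notin U -> l != i -> d 0 l = 0].
Proof.
move=> n_gt0.
have [M [dM M_max]] := submod_max_zero defect_ge0 defect_submod _ defect_set0.
have [MT | MnT] := eqVneq M setT.
  have M0 : M != set0 by apply/set0Pn; exists (Ordinal n_gt0); rewrite MT.
  have [k _ dMk] := peel _ dM M0.
  exists (M :\ k), k; split=> //; first by rewrite setD11.
  by move=> l; rewrite in_setD1 MT in_setT andbT negbK => ->.
have [i [iM i_only]] :
    exists i, i \notin M /\ forall l, l \notin M -> l != i -> d 0 l = 0.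
  have [i /andP [iM di] | zero] := pickP (fun l => (l \notin M) && (d 0 l != 0)).
    exists i; split=> // l lM li; apply/eqP/negPn/negP => dl.
    have [W /M_max WM sep] := separate _ _ li dl di.
    by move: sep; rewrite (contraNF (subsetP WM l) lM) (contraNF (subsetP WM i) iM).
  have /subsetPn [i _ iM] : ~~ (setT \subset M) by rewrite subTset.
  by exists i; split=> // l lM _; apply/eqP; have := zero l; rewrite lM => /negbT/negPn.
by exists M, i.
Qed.

Lemma vertex_witness U i : defect U = 0 -> i \notin U ->
  (forall l, l \notin U -> l != i -> d 0 l = 0) ->
  exists J, inJbar R V n m v s J i /\ d = Jhat R n m s J i.
Proof.
move=> dU iU out0; have [J0 [J0_ad J0_d]] := tight_adapted _ dU.
have [J [J_ad JJ0 rk_iU]] := adapted_extend v _ _ _ iU J0_ad.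
have [J0_out _ _] := J0_ad; have [_ _ J_tot] := J_ad.
have d_iU : rsum d (i |: U) = s.
  rewrite -rsum_vertex (rsum_setC d (i |: U)) [rsum d (~: _)]big1 ?addr0 // => l.
  by rewrite in_setC in_setU1 negb_or => /andP [li lU]; exact: out0.
have s_le : s <= (Jtot n m J)%:R.
  by rewrite J_tot -d_iU -subr_ge0; exact: defect_ge0.
have d_eq : d = Jhat R n m s J i.
  apply/rowP => k; rewrite mxE; have [-> | ki] := eqVneq k i.
    move: d_iU dU; rewrite mul1r J_tot rk_iU natrD /defect /rsum big_setU1 //=; lra.
  rewrite mul0r addr0 JJ0 //; have [kU | kU] := boolP (k \in U).
    exact: J0_d.
  by rewrite J0_out // cards0 out0.
exists J; split=> //; split; first by split=> //; exact: (adapted_free v _ _ J_ad).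
by move=> k; rewrite -d_eq; exact: d_ge0.
Qed.

End AtVertex.
End Polyhedron.

Theorem mainTheorem4 (R : realFieldType) (V : vectType R) (n : nat)
  (m : 'I_n -> nat) (v : forall i : 'I_n, 'I_(m i) -> V) (s : R) :
  (0 < n)%N -> 0 <= s ->
  forall d : 'rV[R]_n, is_vertex R n (inP R V n m v s) d ->
  exists (J : forall i : 'I_n, {set 'I_(m i)}) (i : 'I_n),
    inJbar R V n m v s J i /\ d = Jhat R n m s J i.
Proof.
move=> n_gt0 s_ge0 d d_vertex.
have [U [i [tight_U iU out0]]] := vertex_support v s d s_ge0 d_vertex n_gt0.
have [J witness] := vertex_witness v s d s_ge0 d_vertex U i tight_U iU out0.
by exists J, i.
Qed.
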